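(* Consider the coded cooperative data exchange (CCDE) setting described in the context, with user set $V$, minimum sum-rate $R_{\mathrm{CO}}$, fundamental partition $\mathcal{P}^*$ (which has $|\mathcal{P}^*|\ge 2$), core $\mathscr{R}^*_{\mathrm{CO}}(V)$, and $K=|\mathcal{P}^*|-1$. Let $w_V\in\mathbb{R}_{>0}^{|V|}$ and $g(r_V)=\sum_{i\in V} r_i^2/w_i$. Let $\mathbb{Q}_K=\{z/K: z\in\mathbb{Z}\}$. Then a vector $r^*_V\in\mathscr{R}^*_{\mathrm{CO}}(V)\cap\mathbb{Q}_K^{|V|}$ is a minimizer of $$\min\{g(r_V): r_V\in\mathscr{R}^*_{\mathrm{CO}}(V)\cap\mathbb{Q}_K^{|V|}\}$$ if and only if, for all $i,j\in V$ and all positive integers $\zeta$ such that $r^*_V+\frac{\zeta}{K}(\chi_i-\chi_j)\in\mathscr{R}^*_{\mathrm{CO}}(V)$, we have $g(r^*_V)\le g\big(r^*_V+\frac{\zeta}{K}(\chi_i-\chi_j)\big)$.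
   Context: CCDE setting: there is a finite collection of independent packets, each uniformly distributed over a finite field; each user $i\in V$ ($|V|>1$) observes $Z_i$, a subset of the packets, and entropy is measured in packets, so that for $X\subseteq V$, $H(X)$ (the entropy of $Z_X=(Z_i:i\in X)$) is the number of distinct packets observed by users in $X$; in particular $H$ is integer-valued. Write $r(X)=\sum_{i\in X}r_i$ for $r_V\in\mathbb{R}^{|V|}$, and $H(X\mid Y)=H(X\cup Y)-H(Y)$. The achievable region is $\mathscr{R}(V)=\{r_V: r(X)\ge H(X\mid V\setminus X)\ \forall X\subsetneq V\}$, $R_{\mathrm{CO}}=\min\{r(V): r_V\in\mathscr{R}(V)\}$, and the core is $\mathscr{R}^*_{\mathrm{CO}}(V)=\{r_V\in\mathscr{R}(V): r(V)=R_{\mathrm{CO}}\}$. For $\alpha\in\mathbb{R}$, $f_\alpha(\emptyset)=0$ and $f_\alpha(X)=\alpha-H(V\setminus X\mid X)$ for $X\ne\emptyset$; the fundamental partition $\mathcal{P}^*$ is the finest partition of $V$ minimizing $\sum_{C\in\mathcal{P}}f_{R_{\mathrm{CO}}}(C)$ over all partitions $\mathcal{P}$ of $V$. $\chi_i\in\{0,1\}^{|V|}$ denotes the characteristic vector of $\{i\}$. *)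

From HB Require Import structures.
From mathcomp Require Import all_boot all_order all_algebra.
From mathcomp Require Import boolp classical_sets reals.
Set Implicit Arguments. Unset Strict Implicit. Unset Printing Implicit Defensive.
Import Order.TTheory GRing.Theory Num.Theory.
Local Open Scope ring_scope.

Section CCDE.
Variables (R : realType) (V Pk : finType) (Z : V -> {set Pk}).

(* H(X) = number of distinct packets observed by the users in X *)
Definition Hent (X : {set V}) : R := (#|\bigcup_(i in X) Z i|)%:R.

Definition Hcond (X Y : {set V}) : R := Hent (X :|: Y) - Hent Y.

Definition rsum (r : V -> R) (X : {set V}) : R := \sum_(i in X) r i.

Definition achievable (r : V -> R) : Prop :=
  forall X : {set V}, X \proper [set: V] -> Hcond X (~: X) <= rsum r X.

Definition RCO : R := inf [set rsum r [set: V] | r in achievable].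

Definition core (r : V -> R) : Prop := achievable r /\ rsum r [set: V] = RCO.

Definition fal (a : R) (X : {set V}) : R :=
  if X == finset.set0 then 0 else a - Hcond (~: X) X.

Definition psum (a : R) (Q : {set {set V}}) : R := \sum_(C in Q) fal a C.

Definition fundamental_partition (Ps : {set {set V}}) : Prop :=
  [/\ finset.partition Ps [set: V],
      forall Q, finset.partition Q [set: V] -> psum RCO Ps <= psum RCO Q
    & forall Q, finset.partition Q [set: V] -> psum RCO Q = psum RCO Ps ->
        forall C, C \in Ps -> exists2 D, D \in Q & C \subset D].

End CCDE.

Definition inQK (R : realType) (K : nat) (x : R) : Prop :=
  exists z : int, x = z%:~R / K%:R.

Definition gfun (R : realType) (V : finType) (w : V -> R) (r : V -> R) : R :=
  \sum_(i : V) r i ^+ 2 / w i.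

Definition shift (R : realType) (V : finType) (r : V -> R) (K zeta : nat) (i j : V) : V -> R :=
  fun k => r k + zeta%:R / K%:R * ((k == i)%:R - (k == j)%:R).

Arguments core {R V Pk} Z r.
Arguments fundamental_partition {R V Pk} Z Ps.
Arguments RCO {R V Pk} Z.
Arguments achievable {R V Pk} Z r.

From HB Require Import structures.
From mathcomp Require Import all_boot all_order all_algebra.
From mathcomp Require Import boolp classical_sets reals.
From mathcomp Require Import fintype finset ring lra.
Import Order.TTheory GRing.Theory Num.Theory.
Local Open Scope ring_scope.
Set Implicit Arguments. Unset Strict Implicit. Unset Printing Implicit Defensive.

(* The core is the base polyhedron {r | r(V) = F(V), r(Y) <= F(Y) for Y nonempty}
   of F = f_{R_CO}, which is submodular on intersecting pairs, and on the grid
   Q_K every slack F(Y) - r(Y) is a multiple of 1/K.  Hence the move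
   r + (chi_a - chi_b)/K stays in the core as soon as every tight set containing
   a contains b, and core /\ Q_K has the exchange property of M-convex sets:
   if y_i < x_i, some j with x_j < y_j makes both y + (chi_i - chi_j)/K and
   x - (chi_i - chi_j)/K feasible.  Taking y = rs, local optimality of rs and
   the convexity of t |-> t^2/w show that the second move does not increase g,
   while it brings x closer to rs by 2/K in l1 distance; induction on that
   distance gives g(rs) <= g(x). *)

Section GridQK.
Variables (R : realType) (K : nat).
Hypothesis K_gt0 : (0 < K)%N.

Lemma inQK_add (a b : R) : inQK K a -> inQK K b -> inQK K (a + b).
Proof. by move=> [m ->] [n ->]; exists (m + n); rewrite rmorphD mulrDl. Qed.

Lemma inQK_opp (a : R) : inQK K a -> inQK K (- a).
Proof. by move=> [m ->]; exists (- m); rewrite rmorphN mulNr. Qed.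

Lemma inQK_sub (a b : R) : inQK K a -> inQK K b -> inQK K (a - b).
Proof. by move=> ha hb; apply/inQK_add/inQK_opp. Qed.

Lemma inQK_nat (n : nat) : inQK K (n%:R : R).
Proof.
by exists (n * K)%N; rewrite -pmulrn natrM mulfK // pnatr_eq0 -lt0n.
Qed.

Lemma inQK_sum (I : finType) (P : pred I) (f : I -> R) :
  (forall k, P k -> inQK K (f k)) -> inQK K (\sum_(k | P k) f k).
Proof.
move=> h; apply: (big_ind (inQK K)) => //; last exact: inQK_add.
by exists 0; rewrite mul0r.
Qed.

Lemma inQK_ge (a : R) : inQK K a -> 0 < a -> K%:R^-1 <= a.
Proof.
move=> [m ->]; rewrite pmulr_lgt0 ?invr_gt0 ?ltr0n // ltr0z => m_gt0.
by rewrite -[leLHS]mul1r ler_pM2r ?invr_gt0 ?ltr0n // ler1z.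
Qed.

Lemma inQK_shift (V : finType) (r : V -> R) zeta i j :
  (forall k, inQK K (r k)) -> forall k, inQK K (shift r K zeta i j k).
Proof.
move=> r_QK k; apply: inQK_add => //.
exists (zeta%:Z * ((k == i)%:Z - (k == j)%:Z)).
by rewrite rmorphM rmorphB /= -!pmulrn mulrAC.
Qed.

End GridQK.

Section SetSums.
Variables (R : realType) (V : finType).
Implicit Types (r : V -> R) (A B : {set V}).

Lemma rsum0 r : rsum r set0 = 0.
Proof. exact: big_set0. Qed.

Lemma rsumID r A B : rsum r A = rsum r (A :&: B) + rsum r (A :\: B).
Proof. exact: big_setID. Qed.

Lemma rsumC r A : rsum r (~: A) = rsum r [set: V] - rsum r A.
Proof. by rewrite (rsumID r [set: V] A) setTI setTD addrC addKr. Qed.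

Lemma rsumUI r A B : rsum r (A :|: B) + rsum r (A :&: B) = rsum r A + rsum r B.
Proof.
rewrite (rsumID r (A :|: B) A) setUK setDUl setDv set0U.
by rewrite (rsumID r B A) [B :&: A]setIC; ring.
Qed.

Lemma rsumU r A B : [disjoint A & B] -> rsum r (A :|: B) = rsum r A + rsum r B.
Proof. by move=> /disjoint_setI0 AB0; rewrite -rsumUI AB0 rsum0 addr0. Qed.

Lemma sum_eq_indicator A i : \sum_(k in A) (k == i)%:R = (i \in A)%:R :> R.
Proof.
rewrite big_mkcond (bigD1 i) //= eqxx big1 ?addr0 => [|k /negbTE ->].
  by case: (i \in A).
by case: (k \in A).
Qed.

Lemma rsum_shift r K zeta i j A :
  rsum (shift r K zeta i j) A =
  rsum r A + zeta%:R / K%:R * ((i \in A)%:R - (j \in A)%:R).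
Proof.
by rewrite /rsum /shift big_split /= -mulr_sumr sumrB !sum_eq_indicator.
Qed.

Lemma rsumT_le_eq r s :
  rsum r [set: V] = rsum s [set: V] -> (forall k, r k <= s k) -> r =1 s.
Proof.
move=> sum_eq r_le k; apply/eqP; rewrite eq_sym -subr_eq0; apply/eqP.
apply: (@psumr_eq0P _ _ (fun k => k \in [set: V]) (fun k => s k - r k)).
- by move=> l _; rewrite subr_ge0.
- by rewrite sumrB -/(rsum s _) -/(rsum r _) sum_eq subrr.
- by rewrite in_setT.
Qed.

End SetSums.

Section BasePolyhedron.
Variables (R : realType) (V : finType) (F : {set V} -> R).
Hypothesis F_submod : forall A B : {set V},
  A :&: B != set0 -> F (A :|: B) + F (A :&: B) <= F A + F B.

Definition base (x : V -> R) : Prop :=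
  rsum x [set: V] = F [set: V] /\ forall Y, Y != set0 -> rsum x Y <= F Y.

Definition tight (x : V -> R) (Y : {set V}) : bool :=
  (Y != set0) && (rsum x Y == F Y).

Lemma tightUI x A B : base x -> tight x A -> tight x B -> A :&: B != set0 ->
  tight x (A :|: B) && tight x (A :&: B).
Proof.
move=> [_ x_le] /andP[A0 /eqP xA] /andP[_ /eqP xB] AB0.
have AUB0 : A :|: B != set0.
  by apply: contraNneq A0 => AUB; rewrite -subset0 -AUB subsetUl.
have := x_le _ AUB0; have := x_le _ AB0; have := F_submod AB0.
have := rsumUI x A B; rewrite /tight AUB0 AB0 => *.
by apply/andP; split; apply/eqP; lra.
Qed.

Lemma min_tight_exists y i : base y ->
  exists2 D, tight y D && (i \in D) &
    forall Y, tight y Y -> i \in Y -> D \subset Y.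
Proof.
move=> y_base; pose P := [pred Y | tight y Y && (i \in Y)].
have PT : P [set: V].
  by rewrite /= /tight in_setT y_base.1 eqxx !andbT; apply/set0Pn; exists i.
have [D /minsetP[PD Dmin] _] := minset_exists PT.
exists D => // Y Yt iY; have /andP[Dt iD] := PD.
have DY0 : D :&: Y != set0 by apply/set0Pn; exists i; rewrite inE iD.
have /andP[_ DYt] := tightUI y_base Dt Yt DY0.
by rewrite -(Dmin (D :&: Y)) ?subsetIr ?subsetIl //= DYt inE iD.
Qed.

Lemma maxset_tight_disjoint x i A B :
  base x -> maxset [pred Y | tight x Y && (i \notin Y)] A ->
  maxset [pred Y | tight x Y && (i \notin Y)] B -> A != B -> [disjoint A & B].
Proof.
move=> x_base /maxsetP[/andP[At iA] Amax] /maxsetP[/andP[Bt iB] Bmax].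
apply: contraNT; rewrite -setI_eq0 => AB0.
have /andP[ABt _] := tightUI x_base At Bt AB0.
have PAB : tight x (A :|: B) && (i \notin A :|: B) by rewrite ABt inE negb_or iA.
by rewrite -{1}(Amax _ PAB (subsetUl A B)) (Bmax _ PAB (subsetUr A B)).
Qed.

Lemma maxset_tight_pairwise x i (Ls : {set {set V}}) : base x ->
  (forall L, L \in Ls -> maxset [pred Y | tight x Y && (i \notin Y)] L) ->
  pairwise (fun A B : {set V} => [disjoint A & B]) (enum Ls).
Proof.
move=> x_base Ls_max; apply: (@sub_in_pairwise _ (mem Ls) [rel A B | A != B]).
- move=> A B /Ls_max Amax /Ls_max Bmax.
  exact: maxset_tight_disjoint x_base Amax Bmax.
- by apply/allP=> L; rewrite mem_enum.
- by rewrite -[pairwise _ _]uniq_pairwise enum_uniq.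
Qed.

(* F = fal a is only submodular on intersecting pairs (fal a set0 = 0), which
   is why the union is taken over disjoint sets that all meet D. *)
Lemma tight_union_bound x y D (s : seq {set V}) :
  base y -> pairwise (fun A B : {set V} => [disjoint A & B]) s ->
  (forall L, L \in s -> rsum x L = F L /\ D :&: L != set0) ->
  let U := \bigcup_(L <- s) L in
  F (D :|: U) <= F D - rsum y (D :&: U) + rsum x U.
Proof.
move=> [_ y_le]; elim: s => [|L s IH] /= => [_ _ | /andP[Ls s_disj] s_tight].
  by rewrite big_nil setU0 setI0 !rsum0 subr0 addr0.
rewrite big_cons; set U := \bigcup_(L <- s) L.
have [xL DL0] := s_tight L (mem_head L s).
have LU : [disjoint L & U].
  by rewrite /U bigcup_seq; apply: bigcup_disjoint => B; apply: (allP Ls).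
have DUL : (D :|: U) :&: L = D :&: L.
  by rewrite setIUl [U :&: L]setIC (disjoint_setI0 LU) setU0.
have DLU : [disjoint D :&: L & D :&: U].
  by rewrite -setI_eq0 setIACA setIid (disjoint_setI0 LU) setI0.
have /(IH s_disj) /= IHs :
    forall L', L' \in s -> rsum x L' = F L' /\ D :&: L' != set0.
  by move=> L' L's; apply: s_tight; rewrite inE L's orbT.
have DUL0 : (D :|: U) :&: L != set0 by rewrite DUL.
have := F_submod DUL0; have := y_le _ DL0.
have := rsumU y DLU; have := rsumU x LU.
rewrite DUL setIUr setUA setUAC; lra.
Qed.

Lemma tight_exchange x y i : base x -> base y -> y i < x i ->
  exists j, [/\ x j < y j, forall Y, tight y Y -> i \in Y -> j \in Y
                         & forall Y, tight x Y -> j \in Y -> i \in Y].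
Proof.
move=> x_base y_base yx_i.
have [D /andP[Dt iD] Dmin] := min_tight_exists i y_base.
pose P := [pred Y | tight x Y && (i \notin Y)].
have [/existsP[j /and3P[jD xy_j /existsPn jP]] | /existsPn noj] :=
  boolP [exists j, [&& j \in D, x j < y j & ~~ [exists Y, P Y && (j \in Y)]]].
  exists j; split=> // Y Yt; first by move/(Dmin Y Yt)/subsetP; apply.
  by move=> jY; have := jP Y; rewrite /= Yt jY andbT negbK.
(* Otherwise every such j lies in an x-tight set avoiding i; the union U of the
   maximal ones yields x(D :\: U) <= y(D :\: U), whereas x >= y on D :\: U and
   x i > y i. *)
pose Ls := [set L | maxset P L & D :&: L != set0].
pose U := \bigcup_(L <- enum Ls) L.
have memU k : reflect (exists2 L, L \in Ls & k \in L) (k \in U).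
  by rewrite /U big_enum; apply: bigcupP.
have iU : i \notin U.
  by apply/memU=> -[L]; rewrite inE => /andP[/maxsetp/andP[_ /negP iL] _].
have DxyU k : k \in D -> x k < y k -> k \in U.
  move=> kD xy_k; have := noj k; rewrite kD xy_k negbK.
  case/existsP=> Y /andP[PY kY]; have [L Lmax YL] := maxset_exists PY.
  have kL := subsetP YL k kY; apply/memU; exists L => //.
  by rewrite inE Lmax; apply/set0Pn; exists k; rewrite inE kD.
have Ls_disj : pairwise (fun A B : {set V} => [disjoint A & B]) (enum Ls).
  by apply: (maxset_tight_pairwise (i := i) x_base) => L; rewrite inE => /andP[].
have Ls_tight L : L \in enum Ls -> rsum x L = F L /\ D :&: L != set0.
  by rewrite mem_enum inE => /andP[/maxsetp/andP[/andP[_ /eqP]]].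
exfalso; have /= := tight_union_bound y_base Ls_disj Ls_tight; rewrite -/U.
have /andP[_ /eqP <-] := Dt; rewrite (rsumID y D U).
have DU0 : D :|: U != set0 by apply/set0Pn; exists i; rewrite inE iD.
have := x_base.2 _ DU0; rewrite (rsumID x _ U) setIC setKU setDUl setDv setU0.
have : rsum y (D :\: U) < rsum x (D :\: U).
  rewrite /rsum (bigD1 i) ?[X in _ < X](bigD1 i) ?inE ?iD ?iU //=.
  apply: ltr_leD => //; apply: ler_sum => k /andP[].
  rewrite inE => /andP[kU kD] _.
  by rewrite leNgt; apply: contra kU; apply: DxyU.
lra.
Qed.

End BasePolyhedron.

Section GridBase.
Variables (R : realType) (V : finType) (F : {set V} -> R) (K : nat).
Hypotheses (K_gt0 : (0 < K)%N) (F_QK : forall Y, inQK K (F Y)).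

Lemma base_shift x a b :
  base F x -> (forall k, inQK K (x k)) -> a != b ->
  (forall Y, tight F x Y -> a \in Y -> b \in Y) -> base F (shift x K 1 a b).
Proof.
move=> [xT x_le] x_QK ab ab_tight.
split=> [|Y Y0]; rewrite rsum_shift ?in_setT ?subrr ?mulr0 ?addr0 //.
rewrite mulr1n mul1r.
have := x_le Y Y0; have d_ge0 : 0 <= K%:R^-1 :> R by rewrite invr_ge0 ler0n.
case aY: (a \in Y); case bY: (b \in Y); rewrite ?subrr ?mulr0 ?addr0 //=.
  move=> xY; have slack : K%:R^-1 <= F Y - rsum x Y.
    apply: (inQK_ge K_gt0); first exact/inQK_sub/inQK_sum.
    rewrite subr_gt0 lt_neqAle xY andbT; apply: contraFneq _ bY => FY.
    by apply: ab_tight aY; rewrite /tight Y0 FY eqxx.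
  by rewrite subr0 mulr1; lra.
by rewrite sub0r mulrN1; lra.
Qed.

End GridBase.

Section ShiftSums.
Variables (R : realType) (V : finType).

Lemma sum_shift (f : V -> R -> R) (v : V -> R) K zeta a b : a != b ->
  \sum_k f k (shift v K zeta a b k) =
  \sum_k f k (v k) + (f a (v a + zeta%:R / K%:R) - f a (v a))
                   + (f b (v b - zeta%:R / K%:R) - f b (v b)).
Proof.
move=> ab; have ba : b != a by rewrite eq_sym.
rewrite (bigD1 a) // [in RHS](bigD1 a) //= (bigD1 b) // [in RHS](bigD1 b) //=.
rewrite /shift !eqxx (negbTE ab) (negbTE ba) subr0 sub0r mulr1 mulrN1.
under eq_bigr => k /andP[ka kb] do
  rewrite (negbTE ka) (negbTE kb) subrr mulr0 addr0.
ring.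
Qed.

Lemma gfun_shift (w v : V -> R) K zeta a b : a != b ->
  gfun w (shift v K zeta a b) =
  gfun w v + ((v a + zeta%:R / K%:R) ^+ 2 - v a ^+ 2) / w a
           + ((v b - zeta%:R / K%:R) ^+ 2 - v b ^+ 2) / w b.
Proof.
by move=> ab; rewrite /gfun (sum_shift (fun k t => t ^+ 2 / w k)) // !mulrBl.
Qed.

Definition l1dist (r s : V -> R) : R := \sum_k `|r k - s k|.

Lemma l1dist_ge0 (r s : V -> R) : 0 <= l1dist r s.
Proof. by apply: sumr_ge0 => k _; apply: normr_ge0. Qed.

Lemma l1dist_shift (r s : V -> R) K i j : i != j ->
  K%:R^-1 <= r i - s i -> K%:R^-1 <= s j - r j ->
  l1dist (shift r K 1 j i) s = l1dist r s - 2 / K%:R.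
Proof.
move=> ij ri rj; have d_ge0 : 0 <= K%:R^-1 :> R by rewrite invr_ge0 ler0n.
rewrite /l1dist (sum_shift (fun k t => `|t - s k|)) 1?eq_sym // mulr1n mul1r.
rewrite [`|r i - _|]ger0_norm ?[`|r i - _ - _|]ger0_norm //; try lra.
by rewrite [`|r j - _|]ler0_norm ?[`|r j + _ - _|]ler0_norm; lra.
Qed.

End ShiftSums.

(* Discrete convexity: the marginal cost ((t + d)^2 - t^2)/a increases in t. *)
Lemma sqr_exchange_le (R : realType) (d a b si sj ri rj : R) :
  0 < a -> 0 < b -> 0 <= d -> d <= ri - si -> d <= sj - rj ->
  0 <= ((si + d) ^+ 2 - si ^+ 2) / a + ((sj - d) ^+ 2 - sj ^+ 2) / b ->
  ((rj + d) ^+ 2 - rj ^+ 2) / b + ((ri - d) ^+ 2 - ri ^+ 2) / a <= 0.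
Proof.
move=> a_gt0 b_gt0 d_ge0 di dj.
have gap_i : 0 <= d * a^-1 * (ri - si - d).
  by apply: mulr_ge0; [apply: mulr_ge0; rewrite // invr_ge0 ltW | lra].
have gap_j : 0 <= d * b^-1 * (sj - rj - d).
  by apply: mulr_ge0; [apply: mulr_ge0; rewrite // invr_ge0 ltW | lra].
lra.
Qed.

Section LocalToGlobal.
Variables (R : realType) (V : finType) (F : {set V} -> R).
Variables (K : nat) (w rs : V -> R).
Hypotheses (F_submod : forall A B : {set V},
                A :&: B != set0 -> F (A :|: B) + F (A :&: B) <= F A + F B)
           (K_gt0 : (0 < K)%N) (F_QK : forall Y, inQK K (F Y))
           (w_gt0 : forall k, 0 < w k)
           (rs_base : base F rs) (rs_QK : forall k, inQK K (rs k))
           (rs_local : forall i j, base F (shift rs K 1 i j) ->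
                         gfun w rs <= gfun w (shift rs K 1 i j)).

Lemma gfun_descent r i :
  base F r -> (forall k, inQK K (r k)) -> rs i < r i ->
  exists r', [/\ base F r', forall k, inQK K (r' k), gfun w r' <= gfun w r
               & l1dist r' rs = l1dist r rs - 2 / K%:R].
Proof.
move=> r_base r_QK rs_i.
have [j [r_j rs_ij r_ji]] := tight_exchange F_submod r_base rs_base rs_i.
have ij : i != j by apply: contraTneq r_j => <-; rewrite -leNgt ltW.
have ji : j != i by rewrite eq_sym.
have gap_i : K%:R^-1 <= r i - rs i.
  by apply: inQK_ge; rewrite ?subr_gt0 //; apply: inQK_sub.
have gap_j : K%:R^-1 <= rs j - r j.
  by apply: inQK_ge; rewrite ?subr_gt0 //; apply: inQK_sub.
exists (shift r K 1 j i); split; last exact: l1dist_shift.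
- exact: base_shift.
- exact: inQK_shift.
have := rs_local (base_shift K_gt0 F_QK rs_base rs_QK ij rs_ij).
rewrite !gfun_shift // mulr1n mul1r.
have d_ge0 : 0 <= K%:R^-1 :> R by rewrite invr_ge0 ler0n.
have := sqr_exchange_le (w_gt0 i) (w_gt0 j) d_ge0 gap_i gap_j; lra.
Qed.

Lemma gfun_le_of_le r :
  base F r -> (forall k, r k <= rs k) -> gfun w rs <= gfun w r.
Proof.
move=> [rT _] r_le; have r_rs := rsumT_le_eq (etrans rT (esym rs_base.1)) r_le.
by suff -> : gfun w r = gfun w rs by []; apply: eq_bigr => k _; rewrite r_rs.
Qed.

Lemma gfun_local_min_bounded n r :
  base F r -> (forall k, inQK K (r k)) -> l1dist r rs <= n%:R / K%:R ->
  gfun w rs <= gfun w r.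
Proof.
have step_gt0 : 0 < 2 / K%:R :> R by rewrite divr_gt0 ?ltr0n.
elim: n r => [|n IHn] r r_base r_QK r_dist;
  (have [/forallP r_le | /forallPn[i]] := boolP [forall i, r i <= rs i];
   first exact: gfun_le_of_le);
  rewrite -ltNge => rs_i;
  have [r' [r'_base r'_QK r'_le r'_dist]] := gfun_descent r_base r_QK rs_i.
  by have := l1dist_ge0 r' rs; rewrite mul0r in r_dist; lra.
apply: le_trans (IHn r' r'_base r'_QK _) r'_le.
by rewrite -natr1 mulrDl in r_dist; lra.
Qed.

Lemma gfun_local_min r :
  base F r -> (forall k, inQK K (r k)) -> gfun w rs <= gfun w r.
Proof.
move=> r_base r_QK.
apply: (gfun_local_min_bounded (n := Num.Def.archi_bound (l1dist r rs * K%:R)))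
  => //.
rewrite ler_pdivlMr ?ltr0n // ltW // archi_boundP // mulr_ge0 ?l1dist_ge0 //.
Qed.

End LocalToGlobal.

Section CCDE.
Variables (R : realType) (V Pk : finType) (Z : V -> {set Pk}).

Lemma Hent_submod (A B : {set V}) :
  Hent R Z (A :|: B) + Hent R Z (A :&: B) <= Hent R Z A + Hent R Z B.
Proof.
rewrite /Hent -!natrD ler_nat bigcup_setU -(cardsUI (\bigcup_(i in A) Z i)).
rewrite leq_add2l subset_leq_card //.
by apply/bigcupsP => k; rewrite inE => /andP[kA kB]; rewrite subsetI !bigcup_sup.
Qed.

Lemma fal_nonempty (a : R) X :
  X != set0 -> fal Z a X = a - Hent R Z [set: V] + Hent R Z X.
Proof.
by move=> X0; rewrite /fal (negbTE X0) /Hcond setUC setUCr opprB addrA addrAC.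
Qed.

Lemma fal_submod (a : R) (A B : {set V}) : A :&: B != set0 ->
  fal Z a (A :|: B) + fal Z a (A :&: B) <= fal Z a A + fal Z a B.
Proof.
move=> AB0; have /set0Pn[k] := AB0; rewrite inE => /andP[kA kB].
have := Hent_submod A B; rewrite !fal_nonempty //; try lra.
all: by apply/set0Pn; exists k; rewrite ?inE ?kA ?kB.
Qed.

Lemma fal_QK K (a : R) Y : (0 < K)%N -> inQK K a -> inQK K (fal Z a Y).
Proof.
move=> K_gt0 a_QK; rewrite /fal; case: ifP => _; first by exists 0; rewrite mul0r.
by apply: inQK_sub => //; apply: inQK_sub; apply: inQK_nat.
Qed.

Lemma core_base (r : V -> R) :
  [set: V] != set0 -> core Z r <-> base (fal Z (RCO Z)) r.
Proof.
move=> V0; rewrite /core /base fal_nonempty // addrNK.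
split=> [[r_ach rT] | [rT r_le]]; split=> // X.
  move=> X0; have := r_ach (~: X); rewrite properCl setCT proper0 => /(_ X0).
  by rewrite fal_nonempty // /Hcond setCK setUC setUCr rsumC rT; lra.
rewrite -[X]setCK properCl setCT proper0 => CX0.
by have := r_le _ CX0; rewrite fal_nonempty // /Hcond setCK setUCr rsumC rT; lra.
Qed.

End CCDE.

Theorem lemma2 (R : realType) (V Pk : finType) (Z : V -> {set Pk})
    (w : V -> R) (Ps : {set {set V}}) (rs : V -> R) :
  (1 < #|V|)%N ->
  (forall i, 0 < w i) ->
  @fundamental_partition R V Pk Z Ps ->
  (2 <= #|Ps|)%N ->
  core Z rs -> (forall i, inQK (#|Ps| - 1) (rs i)) ->
  ((forall r : V -> R, core Z r -> (forall i, inQK (#|Ps| - 1) (r i)) ->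
      gfun w rs <= gfun w r)
   <->
   (forall (i j : V) (zeta : nat), (0 < zeta)%N ->
      core Z (shift rs (#|Ps| - 1) zeta i j) ->
      gfun w rs <= gfun w (shift rs (#|Ps| - 1) zeta i j))).
Proof.
(* The fundamental partition only enters through K = |P*| - 1 > 0. *)
move=> V_gt1 w_gt0 _ Ps_ge2 rs_core rs_QK.
have K_gt0 : (0 < #|Ps| - 1)%N by rewrite subn_gt0.
have V0 : [set: V] != set0 by rewrite -card_gt0 cardsT ltnW.
have F_QK Y : inQK (#|Ps| - 1) (fal Z (RCO Z : R) Y).
  by apply: fal_QK => //; rewrite -rs_core.2; apply: inQK_sum.
have rs_base := (core_base Z rs V0).1 rs_core.
split=> [rs_min i j zeta _ shift_core | rs_local r r_core r_QK].
  by apply: rs_min => //; apply: inQK_shift.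
apply: (gfun_local_min (fal_submod Z _) K_gt0 F_QK w_gt0 rs_base rs_QK _ _
          r_QK).
- by move=> i j /(core_base Z _ V0) shift_core; apply: rs_local.
- exact/(core_base Z r V0).
Qed.
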